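(* Let $\varphi_\rho(z)=z\log z$ for $z>0$. In the discrete setting described in the context, let $(\rho_K^{n})_{K\in\mathcal M,\,0\le n\le N}$ be positive, let $(\rho_\sigma^{n+1})_{\sigma\in\mathcal{E}_{\rm int},0\le n\le N-1}$ be face values, and let $u_{K,\sigma}^{n}$ be normal face velocities. For $\sigma=K|L\in\mathcal{E}_{\rm int}$ and $0\le n\le N-1$, let $\rho_{KL}^{n+1}$ be the number $x_{KL}$ associated with $\varphi=\varphi_\rho$, $x_K=\rho_K^{n+1}$, $x_L=\rho_L^{n+1}$, and define \[ (\delta\varphi_\rho)_\sigma^{n+1}=\varphi_\rho(\rho_K^{n+1})-\varphi_\rho(\rho_\sigma^{n+1})+\varphi_\rho'(\rho_K^{n+1})\bigl[\rho_{KL}^{n+1}-\rho_K^{n+1}\bigr]+\tfrac12\bigl[\varphi_\rho'(\rho_K^{n+1})+\varphi_\rho'(\rho_L^{n+1})\bigr]\bigl[\rho_\sigma^{n+1}-\rho_{KL}^{n+1}\bigr] \] (this quantity does not depend on the ordering of $K$ and $L$), and for $K\in\mathcal{M}$, \[ |K|\,(\delta R_m)_K^{n+1}=\sum_{\sigma\in\mathcal{E}(K)\cap\mathcal{E}_{\rm int}}|\sigma|\,(\delta\varphi_\rho)_\sigma^{n+1}u_{K,\sigma}^{n+1}. \] Assume that for every $\sigma=K|L\in\mathcal{E}_{\rm int}$ and $0\le n\le N-1$: $\rho_\sigma^{n+1}\in|\hspace{-0.12em}[\rho_K^{n+1},\rho_{KL}^{n+1}]\hspace{-0.12em}|$ if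 $u_{K,\sigma}^{n+1}\ge0$, and $\rho_\sigma^{n+1}\in|\hspace{-0.12em}[\rho_L^{n+1},\rho_{KL}^{n+1}]\hspace{-0.12em}|$ otherwise. Let $M>1$ and suppose $\rho_K^n\le M$, $1/\rho_K^n\le M$ and $|u_{K,\sigma}^n|\le M$ for all $K\in\mathcal M$, $\sigma\in\mathcal{E}(K)$, $0\le n\le N$. Let $|\varphi_\rho'|_\infty$ be the maximum of $|\varphi_\rho'|$ on $[1/M,M]$. Then \[ \|\delta R_m\|_{-1,1}\le 3\,M\,|\varphi_\rho'|_\infty\,\|\rho\|_{x,BV}\,h_{\mathcal M}. \]
   Context: Setting: $\Omega\subset\mathbb{R}^d$ bounded; $\mathcal{M}$ a regular polytopal mesh of $\Omega$ with faces $\mathcal{E}$, faces of $K$ denoted $\mathcal{E}(K)$, interior faces $\mathcal{E}_{\rm int}$; $\sigma=K|L$ denotes the interior face between $K$ and $L$; $|K|$, $|\sigma|$ are the measures; ${\boldsymbol x}_K$ is the mass center of $K$; $h_{\mathcal M}=\max_{K}{\rm diam}(K)$. Uniform time grid $t_n=n\,\delta t$, $0\le n\le N$, $t_N=T$. Normal velocities satisfy $u_{L,\sigma}^n=-u_{K,\sigma}^n$ for $\sigma=K|L$ and vanish on boundary faces. Notation $|\hspace{-0.12em}[a,b]\hspace{-0.12em}|=[\min(a,b),\max(a,b)]$. The number $x_{KL}$: for a strictly convex continuously differentiable $\varphi$ on an interval $I$ and $x_K,x_L\in I$, $x_{KL}$ is the unique real number in $|\hspace{-0.12em}[x_K,x_L]\hspace{-0.12em}|$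 with $\varphi(x_K)+\varphi'(x_K)(x_{KL}-x_K)=\varphi(x_L)+\varphi'(x_L)(x_{KL}-x_L)$ if $x_K\ne x_L$, and $x_{KL}=x_K=x_L$ otherwise. Norms: for a family $(z_K^n)$, $\|z\|_{x,BV}=\sum_{n}\delta t\sum_{\sigma=K|L\in\mathcal{E}_{\rm int}}|\sigma|\,|z_L^n-z_K^n|$ (sum over all available time indices), and \[ \|z\|_{-1,1}=\sup_{\psi}\frac{1}{\sup_{{\boldsymbol x}\in\Omega,t\in(0,T)}|\nabla\psi({\boldsymbol x},t)|}\Bigl[\sum_{n}\delta t\sum_{K\in\mathcal M}|K|\,z_K^n\,\psi({\boldsymbol x}_K,t_n)\Bigr], \] the supremum being over $\psi\in C^\infty_c([0,T)\times\bar\Omega)$ (with nonzero gradient), and the sum over $n$ over the time indices on which $z$ is defined (here $n=1,\dots,N$). *)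

From HB Require Import structures.
From mathcomp Require Export all_boot all_order all_algebra.
From mathcomp Require Export all_classical all_reals all_analysis.
Set Implicit Arguments. Unset Strict Implicit. Unset Printing Implicit Defensive.
Import Order.TTheory GRing.Theory Num.Theory.
Import numFieldNormedType.Exports.
Local Open Scope classical_set_scope.
Local Open Scope ring_scope.

Definition enorm (R : realType) (d : nat) (x : 'rV[R]_d) : R :=
  Num.sqrt (\sum_(i < d) x ord0 i ^+ 2).

(* The interval |[a,b]| = [min(a,b), max(a,b)]. *)
Definition inI (R : realType) (a b x : R) : Prop :=
  Num.min a b <= x <= Num.max a b.

(* Each face has
   a first neighbour fK and, if it is an interior face sigma = K|L, a second
   neighbour fL = Some L; boundary faces have fL = None. *)
Record mesh (R : realType) (d : nat) := Mesh {
  Omega : set 'rV[R]_d;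
  cell : finType;
  face : finType;
  cellset : cell -> set 'rV[R]_d;
  faceset : face -> set 'rV[R]_d;
  measK : cell -> R;
  measS : face -> R;
  center : cell -> 'rV[R]_d;
  fK : face -> cell;
  fL : face -> option cell;
  Omega_open : open Omega;
  Omega_bounded : bounded_set Omega;
  cell_open : forall K, open (cellset K);
  cell_convex : forall K x y (l : R), cellset K x -> cellset K y ->
     0 <= l <= 1 -> cellset K (l *: x + (1 - l) *: y);
  cell_sub : forall K, cellset K `<=` Omega;
  cell_disj : forall K L, K != L -> cellset K `&` cellset L = set0;
  cell_cover : \bigcup_(K in [set: cell]) closure (cellset K) = closure Omega;
  measK_pos : forall K, 0 < measK K;
  measS_pos : forall s, 0 < measS s;
  center_in : forall K, cellset K (center K);
  face_ne : forall s, faceset s !=set0;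
  face_subK : forall s, faceset s `<=` closure (cellset (fK s));
  face_subL : forall s L, fL s = Some L -> faceset s `<=` closure (cellset L);
  face_two : forall s, fL s <> Some (fK s);
  face_bnd : forall s, fL s = None -> faceset s `<=` ~` Omega
}.

Section MeshDefs.
Variables (R : realType) (d : nat) (m : mesh R d).

Definition faceof (K : cell m) (s : face m) : bool := (fK s == K) || (fL s == Some K).
Definition int_face (s : face m) : bool := fL s != None.
Definition sigL (s : face m) : cell m := odflt (fK s) (fL s).

Definition diam (K : cell m) : R :=
  sup [set r | exists x y, cellset K x /\ cellset K y /\ r = enorm (x - y)].

Definition hM : R := \big[Num.max/0]_(K : cell m) diam K.

Definition BVnorm (T : R) (N : nat) (z : nat -> cell m -> R) : R :=
  \sum_(0 <= n < N.+1) (T / N%:R) *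
    \sum_(s : face m | int_face s) measS s * `|z n (sigL s) - z n (fK s)|.
End MeshDefs.

Fixpoint iterD (R : realType) (V : normedModType R) (vs : seq V)
  (f : V -> R) : V -> R :=
  match vs with
  | [::] => f
  | v :: vs' => fun x => 'D_v (iterD vs' f) x
  end.

Definition smooth (R : realType) (V : normedModType R) (f : V -> R) : Prop :=
  forall (vs : seq V) (x : V), differentiable (iterD vs f) x.

Section Norms.
Variables (R : realType) (d : nat) (m : mesh R d).

Definition ebase (i : 'I_d) : 'rV[R]_d := delta_mx ord0 i.

Definition gradnorm (psi : ('rV[R]_d * R)%type -> R) (x : 'rV[R]_d) (t : R) : R :=
  Num.sqrt (\sum_(i < d) ('D_((ebase i, 0) : ('rV[R]_d * R)%type) psi (x, t)) ^+ 2).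

Definition gradsup (T : R) (psi : ('rV[R]_d * R)%type -> R) : \bar R :=
  ereal_sup [set r | exists x t, Omega m x /\ 0 < t < T /\ r = (gradnorm psi x t)%:E].

(* psi in C^infty_c([0,T) x closure Omega): restriction of a smooth function
   on R^d x R vanishing for t near T (Omega is bounded). *)
Definition test_fun (T : R) (psi : ('rV[R]_d * R)%type -> R) : Prop :=
  smooth psi /\ exists t0, t0 < T /\ forall x t, t0 <= t -> psi (x, t) = 0.

Definition pairing (T : R) (N : nat) (z : nat -> cell m -> R)
  (psi : ('rV[R]_d * R)%type -> R) : R :=
  \sum_(1 <= n < N.+1) (T / N%:R) *
    \sum_(K : cell m) measK K * z n K * psi (center K, n%:R * (T / N%:R)).

Definition dual_norm (T : R) (N : nat) (z : nat -> cell m -> R) : \bar R :=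
  ereal_sup [set r | exists psi, test_fun T psi /\ (0 < gradsup T psi)%E /\
                       r = (pairing T N z psi / fine (gradsup T psi))%:E].
End Norms.

Section Scheme.
Variables (R : realType).

Definition phirho (z : R) : R := z * ln z.

Definition xKL (phi phi' : R -> R) (a b : R) : R :=
  if a == b then a else
  xget a [set x | inI a b x /\ phi a + phi' a * (x - a) = phi b + phi' b * (x - b)].

Definition phinf (M : R) : R :=
  sup [set r | exists z, M^-1 <= z <= M /\ r = `|derive1 phirho z|].

Variables (d : nat) (m : mesh R d).
Variables (rho : nat -> cell m -> R) (rhos : nat -> face m -> R)
          (u : nat -> cell m -> face m -> R).

Definition rhoKL (n : nat) (s : face m) : R :=
  xKL phirho (derive1 phirho) (rho n (fK s)) (rho n (sigL s)).

Definition dphi (n : nat) (s : face m) : R :=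
  let rK := rho n (fK s) in let rL := rho n (sigL s) in
  let rs := rhos n s in let rKL := rhoKL n s in
  phirho rK - phirho rs + derive1 phirho rK * (rKL - rK)
  + 2^-1 * (derive1 phirho rK + derive1 phirho rL) * (rs - rKL).

Definition dR (n : nat) (K : cell m) : R :=
  (measK K)^-1 *
    \sum_(s : face m | faceof K s && int_face s) measS s * dphi n s * u n K s.
End Scheme.

From mathcomp.algebra_tactics Require Import ring lra.
Set Implicit Arguments.
Unset Strict Implicit.
Unset Printing Implicit Defensive.
Import Order.TTheory GRing.Theory Num.Theory.
Import numFieldNormedType.Exports.
Local Open Scope classical_set_scope.
Local Open Scope ring_scope.

(* Because x_KL is where the tangents to phi(z) = z ln z at rho_K and rho_L meet, the face
   defect is minus the mean of two Bregman divergences,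
     (delta phi)_sigma = - [D(rho_K, rho_sigma) + D(rho_L, rho_sigma)] / 2,
   with D(a, s) = phi(s) - phi(a) - phi'(a) (s - a).  For rho_sigma between rho_K and
   rho_L, the inequality ln x <= x - 1 bounds it by
     |ln rho_L - ln rho_K| |rho_L - rho_K| / 2 <= |phi'|_oo |rho_L - rho_K|.
   Against a test function psi, a discrete integration by parts turns the pairing into a
   sum over interior faces of |sigma| (delta phi)_sigma u_{K,sigma} (psi(x_K) - psi(x_L)),
   and the mean value theorem on the convex cells K and L, through a point of sigma,
   bounds the last factor by 2 h_M sup |grad psi|; this even gives the constant 2
   instead of 3. *)

Section Interval.
Variable R : realType.
Implicit Types a b c x : R.

Lemma inIP a b x : inI a b x <-> (a <= x <= b) \/ (b <= x <= a).
Proof.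
rewrite /inI /Num.min /Num.max; case: ltP => ab.
- by split=> [|[] /andP[? ?]]; [left | apply/andP; split; lra ..].
- by split=> [|[] /andP[? ?]]; [right | apply/andP; split; lra ..].
Qed.

Lemma inIC a b x : inI a b x = inI b a x.
Proof. by rewrite /inI minC maxC. Qed.

Lemma inI_trans a b c x : inI a b c -> inI a c x -> inI a b x.
Proof.
move=> /inIP hc /inIP hx; apply/inIP.
by case: hc hx => /andP[? ?] [] /andP[? ?]; [left|left|right|right]; apply/andP; split; lra.
Qed.

End Interval.

Section Tangents.
Variables (R : realType) (phi phi' : R -> R).
Implicit Types a b c s : R.

Definition bregman a s := phi s - phi a - phi' a * (s - a).

Lemma defect_bregmanE a b c s :
  phi a + phi' a * (c - a) = phi b + phi' b * (c - b) ->
  phi a - phi s + phi' a * (c - a) + 2^-1 * (phi' a + phi' b) * (s - c)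
  = - 2^-1 * (bregman a s + bregman b s).
Proof.
move=> tangents; rewrite /bregman (_ : phi b = phi a + phi' a * (c - a) - phi' b * (c - b)).
  by field.
by rewrite tangents; ring.
Qed.

Lemma xKL_spec a b :
  (exists2 x, inI a b x & phi a + phi' a * (x - a) = phi b + phi' b * (x - b)) ->
  let c := xKL phi phi' a b in
  inI a b c /\ phi a + phi' a * (c - a) = phi b + phi' b * (c - b).
Proof.
move=> [x abx tangents] /=; rewrite /xKL; case: eqVneq => [<- | _].
  by split=> //; apply/inIP; left; rewrite lexx.
set P := [set y | _ /\ _].
by apply: (@xgetI _ a P x); split.
Qed.

End Tangents.

#[local] Arguments phirho {R}.

Section Entropy.
Variable R : realType.
Implicit Types a b c s x y : R.

Definition phirho' x : R := ln x + 1.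

Lemma derive1_phirho x : 0 < x -> derive1 (@phirho R) x = phirho' x.
Proof.
move=> x0; rewrite derive1E.
have -> : @phirho R = (id * @ln R : R -> R) by [].
have := is_deriveM (is_derive_id x 1) (is_derive1_ln x0); rewrite /= => ?.
by rewrite derive_val /GRing.scale /= mulr1 divff ?gt_eqF // addrC.
Qed.

Lemma ln_le_subr1 x : 0 < x -> ln x <= x - 1.
Proof.
by move=> x0; have := @le_ln1Dx R (x - 1); rewrite addrCA subrr addr0; apply; lra.
Qed.

Lemma mulr_lnB_le x y : 0 < x -> 0 < y -> x * (ln y - ln x) <= y - x.
Proof.
move=> x0 y0; have := ln_le_subr1 (divr_gt0 y0 x0).
rewrite ln_div ?posrE // -(ler_pM2l x0) => /le_trans; apply.
by rewrite mulrBr mulr1 mulrCA divff ?gt_eqF // mulr1.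
Qed.

Lemma bregman_phirhoE a s : bregman phirho phirho' a s = s * (ln s - ln a) - (s - a).
Proof. by rewrite /bregman /phirho /phirho'; ring. Qed.

Lemma bregman_phirho_ge0 a s : 0 < a -> 0 < s -> 0 <= bregman phirho phirho' a s.
Proof.
move=> a0 s0; rewrite bregman_phirhoE; have := mulr_lnB_le s0 a0; lra.
Qed.

Lemma bregman_phirho_le a s : 0 < a -> 0 < s ->
  bregman phirho phirho' a s <= (ln s - ln a) * (s - a).
Proof.
move=> a0 s0; rewrite bregman_phirhoE; have := mulr_lnB_le a0 s0; lra.
Qed.

Lemma bregman_phirho_sum_le a b s : 0 < a -> a <= s <= b ->
  bregman phirho phirho' a s + bregman phirho phirho' b s <= (ln b - ln a) * (b - a).
Proof.
move=> a0 /andP[sa sb]; have s0 : 0 < s by exact: lt_le_trans sa.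
have b0 : 0 < b by exact: lt_le_trans sb.
have las : ln a <= ln s by rewrite ler_ln ?posrE.
have lsb : ln s <= ln b by rewrite ler_ln ?posrE.
have := bregman_phirho_le a0 s0; have := bregman_phirho_le b0 s0; nra.
Qed.

Lemma phirho_defect_le a b c s : 0 < a -> 0 < b ->
  phirho a + phirho' a * (c - a) = phirho b + phirho' b * (c - b) -> inI a b s ->
  `|phirho a - phirho s + phirho' a * (c - a) + 2^-1 * (phirho' a + phirho' b) * (s - c)|
    <= 2^-1 * `|ln b - ln a| * `|b - a|.
Proof.
move=> a0 b0 /defect_bregmanE -> /inIP sab.
wlog {sab} sab : a b a0 b0 / a <= s <= b.
  move=> wlog; case: sab => sab; first exact: wlog.
  by rewrite addrC distrC (distrC b); exact: wlog.
have s0 : 0 < s by case/andP: sab => /(lt_le_trans a0).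
have [sa sb] := andP sab.
have le_ab : a <= b by exact: le_trans sb.
rewrite normrM normrN [`|2^-1|]ger0_norm ?invr_ge0 //.
rewrite ger0_norm; last exact: addr_ge0 (bregman_phirho_ge0 a0 s0) (bregman_phirho_ge0 b0 s0).
rewrite -mulrA ler_wpM2l ?invr_ge0 //.
rewrite !ger0_norm ?bregman_phirho_sum_le ?subr_ge0 //.
by rewrite ler_ln ?posrE.
Qed.

Lemma phirho_tangents_meet a b : 0 < a -> 0 < b ->
  exists2 x, inI a b x & phirho a + phirho' a * (x - a) = phirho b + phirho' b * (x - b).
Proof.
move=> a0 b0; have [<- | ab] := eqVneq a b.
  by exists a => //; apply/inIP; left; rewrite lexx.
have lnab : ln b - ln a != 0.
  by rewrite subr_eq0 eq_sym; apply: contra_neq ab; apply: ln_inj; rewrite posrE.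
(* the tangents of z ln z at a and b meet at the logarithmic mean of a and b *)
exists ((b - a) / (ln b - ln a)); last by rewrite /phirho /phirho'; field.
wlog lt_ab : a b a0 b0 ab lnab / a < b.
  move=> wlog; case: ltgtP (ab) => // [lt_ab | lt_ba] _; first exact: wlog.
  rewrite inIC -mulrNN !opprB -invrN opprB; apply: wlog => //; first by rewrite eq_sym.
  by rewrite -oppr_eq0 opprB.
have lnab0 : 0 < ln b - ln a by rewrite subr_gt0 ltr_ln ?posrE.
have := mulr_lnB_le a0 b0; have := mulr_lnB_le b0 a0.
by move=> h1 h2; apply/inIP; left; rewrite ler_pdivlMr ?ler_pdivrMr //; apply/andP; split; lra.
Qed.

End Entropy.

Section FaceDefect.
Variable R : realType.

Lemma abs_ln_le (M x : R) : 0 < x -> x <= M -> x^-1 <= M -> `|ln x| <= ln M.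
Proof.
move=> x0 xM ixM; have M0 : 0 < M by exact: lt_le_trans xM.
apply/ler_normlP; split; last by rewrite ler_ln ?posrE.
by rewrite -lnV ?posrE // ler_ln ?posrE ?invr_gt0.
Qed.

Lemma phirho'_le_phinf (M : R) : 1 < M -> phirho' M <= phinf M.
Proof.
move=> M1; have M0 : 0 < M by exact: lt_trans M1.
have lnM0 : 0 <= ln M by rewrite ln_ge0 // ltW.
have iM_le_M : M^-1 <= M by rewrite (le_trans _ (ltW M1)) // invf_le1 // ltW.
apply: ub_le_sup.
  exists (phirho' M) => _ [z [/andP[z1 z2] ->]].
  have z0 : 0 < z by apply: lt_le_trans z1; rewrite invr_gt0.
  have iz_le_M : z^-1 <= M by rewrite -[M]invrK lef_pV2 ?posrE ?invr_gt0.
  have := abs_ln_le z0 z2 iz_le_M.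
  by rewrite derive1_phirho // /phirho' => /ler_normlP[? ?]; apply/ler_normlP; split; lra.
exists M; split; first by rewrite iM_le_M lexx.
by rewrite derive1_phirho // ger0_norm // addr_ge0.
Qed.

Lemma phinf_gt0 (M : R) : 1 < M -> 0 < phinf M.
Proof.
move=> M1; apply: lt_le_trans (phirho'_le_phinf M1).
by rewrite /phirho' ltr_pwDr ?ln_ge0 // ltW.
Qed.

Lemma dphi_le_phinf (d : nat) (m : mesh R d) (rho : nat -> cell m -> R)
    (rhos : nat -> face m -> R) (n : nat) (s : face m) (M : R) :
  1 < M -> (forall K, 0 < rho n K) -> (forall K, rho n K <= M /\ (rho n K)^-1 <= M) ->
  inI (rho n (fK s)) (rhoKL rho n s) (rhos n s) \/
  inI (rho n (sigL s)) (rhoKL rho n s) (rhos n s) ->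
  `|dphi rho rhos n s| <= phinf M * `|rho n (sigL s) - rho n (fK s)|.
Proof.
move=> M1 rho_gt0 rho_bnd hs.
have [a0 b0] := (rho_gt0 (fK s), rho_gt0 (sigL s)).
have [aM iaM] := rho_bnd (fK s); have [bM ibM] := rho_bnd (sigL s).
set a := rho n (fK s) in a0 aM iaM hs *; set b := rho n (sigL s) in b0 bM ibM hs *.
have : exists2 x, inI a b x &
    phirho a + derive1 phirho a * (x - a) = phirho b + derive1 phirho b * (x - b).
  by rewrite !derive1_phirho //; exact: phirho_tangents_meet.
move=> /xKL_spec[abc]; rewrite -/(rhoKL rho n s) !derive1_phirho // => tangents.
have sab : inI a b (rhos n s).
  case: hs => hs; first exact: inI_trans abc hs.
  by rewrite inIC; apply: inI_trans hs; rewrite inIC.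
rewrite /dphi /= !derive1_phirho //.
apply: le_trans (phirho_defect_le a0 b0 tangents sab) _.
rewrite ler_wpM2r //.
have := abs_ln_le a0 aM iaM; have := abs_ln_le b0 bM ibM.
have := ler_normB (ln b) (ln a); have := phirho'_le_phinf M1; rewrite /phirho'.
lra.
Qed.

End FaceDefect.

Lemma cauchy_schwarz (R : realFieldType) (n : nat) (a b : 'I_n -> R) :
  (\sum_i a i * b i) ^+ 2 <= (\sum_i a i ^+ 2) * (\sum_i b i ^+ 2).
Proof.
set A := \sum_i a i ^+ 2; set B := \sum_i b i ^+ 2; set C := \sum_i a i * b i.
have A0 : 0 <= A by apply: sumr_ge0 => i _; exact: sqr_ge0.
have quad_ge0 t : 0 <= A * t ^+ 2 + 2 * C * t + B.
  have -> : A * t ^+ 2 + 2 * C * t + B = \sum_i (a i * t + b i) ^+ 2.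
    rewrite /A /B /C mulr_suml mulr_sumr mulr_suml -!big_split /=.
    by apply: eq_bigr => i _; ring.
  by apply: sumr_ge0 => i _; exact: sqr_ge0.
have [A_eq0 | A_neq0] := eqVneq A 0.
  have a_eq0 i : a i = 0.
    apply/eqP; rewrite -sqrf_eq0; apply/eqP.
    exact: (psumr_eq0P (P := predT) (fun i _ => sqr_ge0 (a i)) A_eq0).
  by rewrite /C big1 ?expr0n ?A_eq0 ?mul0r // => i _; rewrite a_eq0 mul0r.
have A_gt0 : 0 < A by rewrite lt_def A_neq0 A0.
(* the quadratic [A t^2 + 2 C t + B] is minimal at [t = - C / A] *)
have := quad_ge0 (- C / A).
have -> : A * (- C / A) ^+ 2 + 2 * C * (- C / A) + B = B - C ^+ 2 / A by field.
by rewrite subr_ge0 ler_pdivrMr // mulrC.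
Qed.

Lemma normr_sum_mul_le (R : rcfType) (n : nat) (a b : 'I_n -> R) :
  `|\sum_i a i * b i| <= Num.sqrt (\sum_i a i ^+ 2) * Num.sqrt (\sum_i b i ^+ 2).
Proof.
rewrite -sqrtrM; last by apply: sumr_ge0 => i _; exact: sqr_ge0.
rewrite -sqrtr_sqr ler_sqrt ?cauchy_schwarz //.
by rewrite mulr_ge0 // sumr_ge0 // => i _; exact: sqr_ge0.
Qed.

Lemma enorm_le_mx_norm (R : realType) (d : nat) (v : 'rV[R]_d) :
  enorm v <= Num.sqrt d%:R * `|v|.
Proof.
rewrite /enorm -[`|v|]ger0_norm // -sqrtr_sqr -sqrtrM ?ler0n //.
rewrite ler_sqrt ?mulr_ge0 ?sqr_ge0 //.
rewrite mulr_natl -[in X in _ *+ X](card_ord d) -sumr_const; apply: ler_sum => i _.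
rewrite -real_normK ?num_real // ler_pXn2r ?nnegrE //.
have -> : `|v| = mx_norm v by [].
by rewrite mx_normrE (le_bigmax _ (fun ij : 'I_1 * 'I_d => `|v ij.1 ij.2|) (ord0, i)).
Qed.

Lemma continuous_closure_le (T : topologicalType) (R : realType) (f : T -> R)
    (A : set T) (C : R) :
  continuous f -> (forall q, A q -> f q <= C) -> forall p, closure A p -> f p <= C.
Proof.
move=> cf fA p Ap.
have cB : closed (f @^-1` [set r | r <= C]).
  by move/continuous_closedP : cf; apply; exact: closed_le.
by move: (closureS fA Ap); rewrite -(closure_id _).1.
Qed.

Section GradientBound.
Variables (R : realType) (d : nat).
Implicit Types (psi : 'rV[R]_d * R -> R) (x y v : 'rV[R]_d) (t g : R).

Lemma derive_space_sum psi (z : 'rV[R]_d * R) v : differentiable psi z ->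
  'D_((v, 0) : 'rV[R]_d * R) psi z =
    \sum_i v ord0 i * 'D_((ebase R i, 0) : 'rV[R]_d * R) psi z.
Proof.
move=> dz; rewrite deriveE //.
have -> : ((v, 0) : 'rV[R]_d * R) = \sum_i v ord0 i *: ((ebase R i, 0) : 'rV[R]_d * R).
  rewrite {1}[v]matrix_sum_delta big_ord1.
  elim/big_rec2: _ => // i p w _ <-.
  by rewrite -[RHS]/(v ord0 i *: ebase R i + w, v ord0 i * 0 + 0) mulr0 addr0.
by rewrite linear_sum; apply: eq_bigr => i _; rewrite linearZ deriveE.
Qed.

Lemma gradnorm_lipschitz psi (S : set 'rV[R]_d) t g x y :
  (forall z, differentiable psi z) ->
  (forall l : R, 0 <= l <= 1 -> S (x + l *: (y - x))) ->
  (forall z, S z -> gradnorm psi z t <= g) ->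
  `|psi (y, t) - psi (x, t)| <= g * enorm (y - x).
Proof.
move=> dpsi seg gS; set v := y - x.
pose F (l : R) := psi (x + l *: v, t).
pose dF (l : R) := 'D_((v, 0) : 'rV[R]_d * R) psi (x + l *: v, t).
have F_deriv (l : R) : is_derive l (1 : R) F (dF l).
  have incrE : (fun h : R => h^-1 *: ((F \o shift l) (h *: (1 : R)) - F l)) =
      (fun h : R => h^-1 *: ((psi \o shift ((x + l *: v, t) : 'rV[R]_d * R))
         (h *: ((v, 0) : 'rV[R]_d * R)) - psi (x + l *: v, t))).
    apply/funext => h /=; rewrite /F /shift /=.
    congr (_ *: (psi _ - _)).
    rewrite -[RHS]/(h *: v + (x + l *: v), h * 0 + t) mulr0 add0r.
    by congr pair; rewrite [h *: 1]mulr1 scalerDl addrCA.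
  split; first by rewrite /derivable incrE; exact: diff_derivable.
  by rewrite /derive incrE.
have [c c01 mvt] : exists2 c, c \in `[0, 1] & F 1 - F 0 = dF c * (1 - 0).
  apply: (MVT_segment ler01 (fun l _ => F_deriv l)).
  by apply: derivable_within_continuous => l _; have [] := F_deriv l.
have -> : psi (y, t) = F 1 by rewrite /F scale1r /v addrC subrK.
have -> : psi (x, t) = F 0 by rewrite /F scale0r addr0.
rewrite mvt subr0 mulr1 /dF derive_space_sum //.
apply: le_trans (normr_sum_mul_le _ _) _.
rewrite [g * _]mulrC ler_wpM2l ?sqrtr_ge0 //.
by apply: (gS _ (seg c _)); move: c01; rewrite in_itv.
Qed.

End GradientBound.

Section MeshGeometry.
Variables (R : realType) (d : nat) (m : mesh R d).
Implicit Types (psi : 'rV[R]_d * R -> R) (t g : R) (K : cell m) (s : face m).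

Lemma diam_ub K x y : cellset K x -> cellset K y -> enorm (x - y) <= diam K.
Proof.
move=> Kx Ky; apply: ub_le_sup; last by exists x, y.
have [B [_ HB]] := Omega_bounded m.
have OB : Omega m `<=` [set z | `|z| <= B + 1] by apply: HB; lra.
exists (Num.sqrt d%:R * (2 * (B + 1))) => _ [x' [y' [Kx' [Ky' ->]]]].
apply: le_trans (enorm_le_mx_norm _) _; rewrite ler_wpM2l ?sqrtr_ge0 //.
apply: le_trans (ler_normB _ _) _.
by have := OB _ (cell_sub Kx'); have := OB _ (cell_sub Ky'); rewrite /=; lra.
Qed.

Lemma diam_le_hM K : diam K <= hM m.
Proof. exact: le_bigmax. Qed.

Lemma hM_ge0 : 0 <= hM m.
Proof. exact: bigmax_ge_id. Qed.

Section TestFunction.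
Variables (psi : 'rV[R]_d * R -> R) (t g : R).
Hypothesis psi_diff : forall z, differentiable psi z.
Hypothesis gradnorm_le : forall x, Omega m x -> gradnorm psi x t <= g.

Lemma gradnorm_bound_ge0 K : 0 <= g.
Proof. exact: le_trans (sqrtr_ge0 _) (gradnorm_le (cell_sub (center_in K))). Qed.

Lemma psi_cell_le K q : closure (cellset K) q ->
  `|psi (q, t) - psi (center K, t)| <= g * hM m.
Proof.
have psi_t_cont : continuous (fun q : 'rV[R]_d => psi (q, t)).
  move=> q'; apply: (continuous_comp (f := fun q => (q, t))).
    exact: (@cvg_pair _ _ _ (nbhs q') (nbhs q') (nbhs t) _ _ _ id (fun=> t) cvg_id (cvg_cst t)).
  exact: differentiable_continuous.
move=> Kq; apply: (continuous_closure_le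
  (f := fun q => `|psi (q, t) - psi (center K, t)|) _ _ Kq) => [q' | q' Kq'].
  apply: (continuous_comp (f := fun q => psi (q, t) - psi (center K, t)) (g := Num.norm)).
    exact: (cvgB (psi_t_cont q') (cvg_cst _)).
  exact: norm_continuous.
have seg (l : R) : 0 <= l <= 1 -> cellset K (center K + l *: (q' - center K)).
  move=> /andP[l0 l1].
  have := cell_convex Kq' (center_in K) (l := l); rewrite l0 l1 => /(_ isT).
  by congr (cellset K _); rewrite scalerBl scale1r scalerBr [RHS]addrCA.
apply: le_trans (gradnorm_lipschitz psi_diff seg (fun z Kz => gradnorm_le (cell_sub Kz))) _.
rewrite ler_wpM2l ?(gradnorm_bound_ge0 K) //.
exact: le_trans (diam_ub Kq' (center_in K)) (diam_le_hM K).
Qed.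

Lemma psi_face_le s :
  `|psi (center (fK s), t) - psi (center (sigL s), t)| <= 2 * g * hM m.
Proof.
have le0 : 0 <= 2 * g * hM m by rewrite !mulr_ge0 ?hM_ge0 ?(gradnorm_bound_ge0 (fK s)).
rewrite /sigL; case E: (fL s) => [L|] /=; last by rewrite subrr normr0.
have [p Sp] := face_ne s.
apply: le_trans (ler_distD (psi (p, t)) _ _) _; rewrite distrC -mulrA mulr_natl mulr2n.
apply: lerD; apply: psi_cell_le; first exact: face_subK Sp.
by have := face_subL E Sp.
Qed.

End TestFunction.

Lemma BVnorm_ge0 (T : R) (N : nat) (z : nat -> cell m -> R) :
  0 <= T -> 0 <= BVnorm T N z.
Proof.
move=> T_ge0; apply: sumr_ge0 => n _; rewrite mulr_ge0 ?divr_ge0 //.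
by apply: sumr_ge0 => s _; rewrite mulr_ge0 ?(ltW (measS_pos s)).
Qed.

Lemma sum_cells_faces_antisym (F : cell m -> face m -> R) (w : cell m -> R) :
  (forall s L, fL s = Some L -> F L s = - F (fK s) s) ->
  \sum_K \sum_(s | faceof K s && int_face s) F K s * w K =
  \sum_(s | int_face s) F (fK s) s * (w (fK s) - w (sigL s)).
Proof.
move=> F_antisym; under eq_bigr => K _ do rewrite big_mkcond /=.
rewrite exchange_big [RHS]big_mkcond; apply: eq_bigr => s _.
rewrite /int_face /sigL; case E: (fL s) => [L|] /=; last first.
  by apply: big1 => K _; rewrite /faceof E andbF.
have LK : L != fK s by apply/eqP => LK; apply: (@face_two _ _ m s); rewrite E LK.
rewrite (bigD1 (fK s)) // (bigD1 L) //= /faceof E !eqxx orbT /=.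
rewrite big1 ?addr0 => [|K /andP[KfK KL]]; last first.
  rewrite [fK s == K]eq_sym (negbTE KfK) /=.
  by case: eqP => // -[LK']; rewrite LK' eqxx in KL.
by rewrite (F_antisym s L E); ring.
Qed.

End MeshGeometry.

Section DualEstimate.
Variables (R : realType) (d : nat) (m : mesh R d) (T : R) (N : nat).
Variables (rho : nat -> cell m -> R) (rhos : nat -> face m -> R).
Variables (u : nat -> cell m -> face m -> R) (M : R).
Hypothesis T_gt0 : 0 < T.
Hypothesis N_gt0 : (0 < N)%N.
Hypothesis rho_gt0 : forall n K, (n <= N)%N -> 0 < rho n K.
Hypothesis u_antisym : forall n s, (n <= N)%N ->
  (forall L, fL s = Some L -> u n L s = - u n (fK s) s) /\ (fL s = None -> u n (fK s) s = 0).
Hypothesis rhos_between : forall n s, (n < N)%N -> int_face s ->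
  if 0 <= u n.+1 (fK s) s
  then inI (rho n.+1 (fK s)) (rhoKL rho n.+1 s) (rhos n.+1 s)
  else inI (rho n.+1 (sigL s)) (rhoKL rho n.+1 s) (rhos n.+1 s).
Hypothesis M_gt1 : 1 < M.
Hypothesis rho_bnd : forall n K, (n <= N)%N -> rho n K <= M /\ (rho n K)^-1 <= M.
Hypothesis u_bnd : forall n K s, (n <= N)%N -> faceof K s -> `|u n K s| <= M.

Definition jumps (n : nat) : R :=
  \sum_(s : face m | int_face s) measS s * `|rho n (sigL s) - rho n (fK s)|.

Lemma jumps_ge0 n : 0 <= jumps n.
Proof. by apply: sumr_ge0 => s _; rewrite mulr_ge0 ?(ltW (measS_pos s)). Qed.

Lemma weighted_dR_le n (w : cell m -> R) (D : R) : (0 < n <= N)%N ->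
  (forall s, int_face s -> `|w (fK s) - w (sigL s)| <= D) ->
  `|\sum_K measK K * dR rho rhos u n K * w K| <= M * phinf M * D * jumps n.
Proof.
move=> /andP[n_gt0 n_le] w_le.
have -> : \sum_K measK K * dR rho rhos u n K * w K =
    \sum_K \sum_(s | faceof K s && int_face s) (measS s * dphi rho rhos n s * u n K s) * w K.
  apply: eq_bigr => K _.
  by rewrite /dR mulrA mulfV ?gt_eqF ?measK_pos // mul1r mulr_suml.
rewrite sum_cells_faces_antisym => [|s L E]; last first.
  by have [uL _] := u_antisym s n_le; rewrite (uL L E); ring.
rewrite /jumps mulr_sumr; apply: le_trans (ler_norm_sum _ _ _) _.
apply: ler_sum => s int_s; rewrite !normrM (ger0_norm (ltW (measS_pos s))).
have dphi_le : `|dphi rho rhos n s| <= phinf M * `|rho n (sigL s) - rho n (fK s)|.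
  apply: dphi_le_phinf => // [K | K|]; [exact: rho_gt0 | exact: rho_bnd |].
  have lt_n1N : (n.-1 < N)%N by rewrite prednK.
  have := @rhos_between n.-1 s lt_n1N int_s; rewrite prednK //.
  by case: ifP => _ ?; [left | right].
have u_le : `|u n (fK s) s| <= M by rewrite u_bnd // /faceof eqxx.
have := ler_pM (mulr_ge0 (normr_ge0 _) (normr_ge0 _)) (normr_ge0 _)
  (ler_pM (normr_ge0 _) (normr_ge0 _) dphi_le u_le) (w_le s int_s).
move=> /(ler_wpM2l (ltW (measS_pos s))); rewrite !mulrA; lra.
Qed.

Lemma pairing_dR_le (psi : 'rV[R]_d * R -> R) (g : R) : test_fun T psi -> 0 < g ->
  (forall t x, 0 < t < T -> Omega m x -> gradnorm psi x t <= g) ->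
  pairing T N (dR rho rhos u) psi <= 3 * M * phinf M * BVnorm T N rho * hM m * g.
Proof.
move=> [psi_smooth [t0 [t0_lt_T psi_vanish]]] g_gt0 grad_le.
have psi_diff z : differentiable psi z := psi_smooth [::] z.
set dt := T / N%:R.
have dt_gt0 : 0 < dt by rewrite divr_gt0 ?ltr0n.
set C := M * phinf M * g * hM m.
have C_ge0 : 0 <= C.
  by rewrite !mulr_ge0 ?hM_ge0 ?(ltW g_gt0) ?(ltW (phinf_gt0 M_gt1)) ?(ltW (lt_trans ltr01 M_gt1)).
have face_le n (s : face m) : (0 < n <= N)%N -> int_face s ->
    `|psi (center (fK s), n%:R * dt) - psi (center (sigL s), n%:R * dt)| <= 2 * g * hM m.
  move=> /andP[n_gt0 n_le] _; case: (ltnP n N) => [n_lt | N_le].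
    apply: (psi_face_le psi_diff) => x; apply: grad_le.
    by rewrite mulr_gt0 ?ltr0n //= /dt mulrCA gtr_pMr // ltr_pdivrMr ?ltr0n // mul1r ltr_nat.
  (* t_N = T lies outside (0, T), where the gradient is not controlled, but psi vanishes *)
  have -> : n%:R * dt = T.
    by rewrite (@anti_leq n N) ?n_le // /dt mulrCA divff ?mulr1 // pnatr_eq0 -lt0n.
  have psiT x : psi (x, T) = 0 by apply: psi_vanish; exact: ltW.
  by rewrite !psiT subrr normr0 !mulr_ge0 ?hM_ge0 ?(ltW g_gt0).
apply: (@le_trans _ _ (\sum_(1 <= n < N.+1) dt * (2 * C * jumps n))).
  apply: ler_sum_nat => n /andP[n_gt0 n_le]; rewrite ler_wpM2l ?(ltW dt_gt0) //.
  apply: le_trans (ler_norm _) _; apply: le_trans (weighted_dR_le _ _) _.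
  - by rewrite n_gt0 -ltnS.
  - by move=> s; apply: face_le; rewrite n_gt0 -ltnS.
  - by rewrite /C; lra.
apply: (@le_trans _ _ (\sum_(0 <= n < N.+1) dt * (3 * C * jumps n))).
  rewrite (big_ltn (ltn0Sn N)); apply: ler_wpDl.
    by rewrite mulr_ge0 ?(ltW dt_gt0) // mulr_ge0 ?jumps_ge0 //; lra.
  apply: ler_sum_nat => n _; rewrite ler_wpM2l ?(ltW dt_gt0) // ler_wpM2r ?jumps_ge0 //; lra.
rewrite le_eqVlt /BVnorm mulr_sumr !mulr_suml; apply/predU1l/eq_bigr => n _.
by rewrite /C /jumps /dt; ring.
Qed.

End DualEstimate.

Theorem lemma2p7 (R : realType) (d : nat) (m : mesh R d) (T : R) (N : nat)
  (rho : nat -> cell m -> R) (rhos : nat -> face m -> R)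
  (u : nat -> cell m -> face m -> R) (M : R) :
  0 < T -> (0 < N)%N ->
  (forall n K, (n <= N)%N -> 0 < rho n K) ->
  (forall n s, (n <= N)%N ->
     (forall L, fL s = Some L -> u n L s = - u n (fK s) s) /\
     (fL s = None -> u n (fK s) s = 0)) ->
  (forall n s, (n < N)%N -> int_face s ->
     if 0 <= u n.+1 (fK s) s
     then inI (rho n.+1 (fK s)) (rhoKL rho n.+1 s) (rhos n.+1 s)
     else inI (rho n.+1 (sigL s)) (rhoKL rho n.+1 s) (rhos n.+1 s)) ->
  1 < M ->
  (forall n K, (n <= N)%N -> rho n K <= M /\ (rho n K)^-1 <= M) ->
  (forall n K s, (n <= N)%N -> faceof K s -> `|u n K s| <= M) ->
  (dual_norm T N (dR rho rhos u) <=
     (3 * M * phinf M * BVnorm T N rho * hM m)%:E)%E.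
Proof.
move=> T_gt0 N_gt0 rho_gt0 u_antisym rhos_between M_gt1 rho_bnd u_bnd.
apply: ge_ereal_sup => _ [psi [psi_test [grad_gt0 ->]]].
have M_gt0 : 0 < M := lt_trans ltr01 M_gt1.
case E: (gradsup m T psi) grad_gt0 => [g | |] //= g_gt0; last first.
  by rewrite invr0 mulr0 lee_fin !mulr_ge0 ?hM_ge0 ?BVnorm_ge0 ?(ltW T_gt0) ?(ltW M_gt0)
       ?(ltW (phinf_gt0 M_gt1)).
rewrite lte_fin in g_gt0; rewrite lee_fin ler_pdivrMr //.
apply: (pairing_dR_le T_gt0 N_gt0 rho_gt0 u_antisym rhos_between M_gt1 rho_bnd u_bnd
  psi_test g_gt0).
by move=> t x t_in Ox; rewrite -lee_fin -E; apply: ereal_sup_ubound; exists x, t.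
Qed.
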